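(* Let $G(t)\in\mathbb{Z}[t]$ with $\deg G=N$, and suppose $G(t)$ is a product of distinct non-constant polynomials, each irreducible over $\mathbb{Z}$ and of degree at most $3$. If $G(t)$ has a local obstruction at the prime $\ell$, then $\ell\le (N_\ell+2)/2$, where $N_\ell$ is the number of (not necessarily distinct) non-constant linear factors in the factorization of $G(t)$ modulo $\ell$ in $\mathbb{F}_\ell[t]$.
   Context: For $G(t)\in\mathbb{Z}[t]$ and a prime $\ell$, $G$ is said to have a local obstruction at $\ell$ if $G(z)\equiv 0\pmod{\ell^2}$ for every $z\in(\mathbb{Z}/\ell^2\mathbb{Z})^*$. *)

From HB Require Import structures.
From mathcomp Require Import all_boot all_order all_algebra.
Set Implicit Arguments. Unset Strict Implicit. Unset Printing Implicit Defensive.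
Import Order.TTheory GRing.Theory Num.Theory.
Local Open Scope ring_scope.

(* For a
   non-constant polynomial this means: primitive and irreducible over Q. *)
Definition irreducible_Z (p : {poly int}) : Prop :=
  p != 0 /\ p \isn't a GRing.unit /\
  forall a b : {poly int}, p = a * b -> a \is a GRing.unit \/ b \is a GRing.unit.

(* G has a local obstruction at l : G(z) = 0 mod l^2 for every z in (Z/l^2Z)^*,
   written over representatives z in Z (z is a unit mod l^2 iff coprime to l). *)
Definition local_obstruction (G : {poly int}) (l : nat) : Prop :=
  forall z : int, coprimez z (l%:Z) -> ((l%:Z) ^+ 2 %| G.[z])%Z.

Definition reduce_mod (l : nat) (G : {poly int}) : {poly 'F_l} :=
  map_poly (fun c : int => c%:~R) G.

Definition N_lin (l : nat) (G : {poly int}) : nat :=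
  (\sum_(a : 'F_l) mup a (reduce_mod l G))%N.

(* Modulo l, the local obstruction makes every nonzero a in F_l a double root
   of G: writing G = Q (t - z) + G(z) with z an integer lift of a, the values
   G(z) and G(z + l) are both divisible by l^2, so l^2 divides l Q(z + l) and
   hence Q(a) = 0 in F_l.  Each irreducible factor of G is primitive, so G does
   not vanish modulo l, and summing multiplicities gives N_l >= 2 (l - 1). *)

From HB Require Import structures.
From mathcomp Require Import all_boot all_order all_algebra.
From mathcomp Require Import zify.
Set Implicit Arguments. Unset Strict Implicit. Unset Printing Implicit Defensive.
Import Order.TTheory GRing.Theory Num.Theory.
Local Open Scope ring_scope.

Lemma irreducible_Z_zcontents_unit (f : {poly int}) :
  (1 < size f)%N -> irreducible_Z f -> zcontents f \is a GRing.unit.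
Proof.
move=> sf [_ [_ irrf]].
have := irrf (zcontents f)%:P (zprimitive f).
rewrite mul_polyC -zpolyEprim => /(_ erefl) [].
  by rewrite poly_unitE coefC /= => /andP[].
by rewrite poly_unitE size_zprimitive => /andP[/eqP sf1]; rewrite sf1 in sf.
Qed.

Lemma reduce_mod_eq0 (l : nat) (f : {poly int}) : prime l ->
  (reduce_mod l f == 0) = (l%:Z %| zcontents f)%Z.
Proof.
move=> pl; rewrite dvdz_contents; apply/eqP/polyOverP => [f0 i | dvdf].
  rewrite (dvdz_pcharf (pchar_Fp pl)).
  by move/polyP: f0 => /(_ i); rewrite coef_map coef0 => ->.
apply/polyP => i; rewrite coef_map coef0 /=.
by apply/eqP; rewrite -(dvdz_pcharf (pchar_Fp pl)).
Qed.

Lemma reduce_mod_neq0 (l : nat) (f : {poly int}) : prime l ->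
  zcontents f \is a GRing.unit -> reduce_mod l f != 0.
Proof.
move=> pl cf; rewrite reduce_mod_eq0 //; apply/negP.
move=> /(dvdz_mulr (zcontents f)^-1); rewrite mulrV // dvdzE /= dvdn1 => /eqP l1.
by rewrite l1 in pl.
Qed.

Lemma reduce_mod_prod_neq0 (l : nat) (fs : seq {poly int}) : prime l ->
  (forall f, f \in fs -> zcontents f \is a GRing.unit) ->
  reduce_mod l (\prod_(f <- fs) f) != 0.
Proof.
move=> pl cfs; rewrite /reduce_mod rmorph_prod /= prodf_seq_neq0.
by apply/allP => f /cfs; apply: reduce_mod_neq0.
Qed.

Lemma horner_reduce_mod (l : nat) (G : {poly int}) (z : int) :
  (reduce_mod l G).[z%:~R] = (G.[z])%:~R.
Proof. by rewrite horner_map. Qed.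

Lemma sqr_factor_reduce_mod (l : nat) (G : {poly int}) (z : int) : prime l ->
  (l%:Z ^+ 2 %| G.[z])%Z -> (l%:Z ^+ 2 %| G.[z + l%:Z])%Z ->
  ('X - (z%:~R : 'F_l)%:P) ^+ 2 %| reduce_mod l G.
Proof.
move=> pl dvd_z dvd_zl.
have pcharl := pchar_Fp pl.
have [Q GQ] : exists Q, G - (G.[z])%:P = Q * ('X - z%:P).
  by apply/factor_theorem; rewrite /root !hornerE subrr.
have {}GQ : G = Q * ('X - z%:P) + (G.[z])%:P by rewrite -GQ subrK.
have dvd_Ql : (l%:Z ^+ 2 %| Q.[z + l%:Z] * l%:Z)%Z.
  have -> : Q.[z + l%:Z] * l%:Z = G.[z + l%:Z] - G.[z].
    by rewrite {1}GQ !hornerE addrK addrAC subrr add0r.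
  exact: rpredB.
have rootQ : root (reduce_mod l Q) (z%:~R : 'F_l).
  move: dvd_Ql; rewrite expr2 mulrC dvdz_mul2l; last first.
    by rewrite eqz_nat -lt0n prime_gt0.
  rewrite (dvdz_pcharf pcharl) -horner_reduce_mod rmorphD /=.
  have -> : (l%:Z)%:~R = 0 :> 'F_l by exact: (pchar_Fp_0 pl).
  by rewrite addr0.
have [R QR] := factor_theorem _ _ rootQ.
have Gz0 : (G.[z])%:~R = 0 :> 'F_l.
  by apply/eqP; rewrite -(dvdz_pcharf pcharl) (dvdz_trans _ dvd_z) // dvdz_mull.
have -> : reduce_mod l G = R * ('X - (z%:~R)%:P) ^+ 2.
  rewrite {1}GQ /reduce_mod rmorphD rmorphM /= map_polyC /= Gz0 addr0.
  rewrite -/(reduce_mod l Q) QR rmorphB /= map_polyX map_polyC /=.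
  by rewrite expr2 mulrA.
exact: dvdp_mull.
Qed.

Lemma local_obstruction_mup (l : nat) (G : {poly int}) (a : 'F_l) : prime l ->
  local_obstruction G l -> reduce_mod l G != 0 -> a != 0 ->
  (2 <= mup a (reduce_mod l G))%N.
Proof.
move=> pl lo G0 a0.
have al : (val a < l)%N by have := ltn_ord a; rewrite [X in (_ < X)%N -> _]Fp_cast.
have a_gt0 : (0 < val a)%N by rewrite lt0n; apply: contra_neq a0 => a_eq0; exact: val_inj.
have coprime_a : coprime (val a) l.
  by rewrite coprime_sym prime_coprime //; apply/negP => /(dvdn_leq a_gt0); rewrite leqNgt al.
have coprime_al : coprime (val a + l) l by rewrite -coprime_modl modnDr coprime_modl.
have za : ((val a)%:Z)%:~R = a :> 'F_l by exact: natr_Zp.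
by rewrite mup_geq // -za; apply: sqr_factor_reduce_mod => //; apply: lo.
Qed.

Lemma N_lin_ge (l : nat) (G : {poly int}) : prime l ->
  (forall a : 'F_l, a != 0 -> (2 <= mup a (reduce_mod l G))%N) ->
  (2 * (l - 1) <= N_lin l G)%N.
Proof.
move=> pl mup_ge2; rewrite /N_lin (bigD1 0%R) //=; apply: leq_trans (leq_addl _ _).
apply: (@leq_trans (\sum_(a : 'F_l | a != 0) 2)); last exact: leq_sum.
by rewrite sum_nat_const cardC1 card_Fp // mulnC subn1.
Qed.

Theorem mainTheorem2 (G : {poly int}) (N : nat) (fs : seq {poly int}) (l : nat) :
  (size G).-1 = N ->
  G = \prod_(f <- fs) f ->
  uniq fs ->
  (forall f, f \in fs -> [/\ 1 < size f, size f <= 4 & irreducible_Z f]%N) ->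
  prime l ->
  local_obstruction G l ->
  (l%:Q <= ((N_lin l G)%:Q + 2) / 2).
Proof.
move=> _ Gfs _ fsP pl lo.
have G0 : reduce_mod l G != 0.
  rewrite Gfs; apply: reduce_mod_prod_neq0 => // f /fsP[sf _ irrf].
  exact: irreducible_Z_zcontents_unit.
have := N_lin_ge pl (fun a => local_obstruction_mup (a := a) pl lo G0).
have l_gt1 := prime_gt1 pl.
rewrite ler_pdivlMr // -[2%:R]/(2%:R : rat) -natrM -natrD ler_nat.
lia.
Qed.
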